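(* Let $\lambda\in(\frac16,\frac56)$. For all $n\ge0$, $$\sup_{z\in[0,1]}|F^\lambda_{n+1}(z)-F^\lambda_n(z)|\le\begin{cases}\lambda\left(\frac13+2\lambda\right)^n&\text{if }\lambda\in(\frac16,\frac13),\\ \lambda\left(\frac16+\lambda\right)^n&\text{if }\lambda\in[\frac13,\frac56).\end{cases}$$
   Context: Fix $\lambda>0$. $F^\lambda_0\equiv0$ on $[0,1]$ (one interval of generation $0$). Given $F^\lambda_n$ with its $4^n$ closed intervals of generation $n$ (covering $[0,1]$, disjoint interiors, $F^\lambda_n$ affine on each), on each interval $[a,b]$ of generation $n$, with $\ell=b-a$ and $m$ the slope of $F^\lambda_n$ there, $F^\lambda_{n+1}$ coincides with $F^\lambda_n$ at $a,a+\ell/3,a+2\ell/3,b$, equals $F^\lambda_n(a+\ell/2)+\lambda\ell\sqrt{1+m^2}$ at $a+\ell/2$, and is affine on each of $[a,a+\ell/3],[a+\ell/3,a+\ell/2],[a+\ell/2,a+2\ell/3],[a+2\ell/3,b]$ (generation $n+1$). *)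

From Stdlib Require Import Reals List.
Open Scope R_scope.

(* An affine piece of generation n: interval [sa, sb] with the values
   fa = F(sa), fb = F(sb); F is affine on [sa, sb]. *)
Record seg := Seg { sa : R; sb : R; fa : R; fb : R }.

Definition seg_len (s : seg) : R := sb s - sa s.
Definition seg_slope (s : seg) : R := (fb s - fa s) / (sb s - sa s).
Definition seg_val (s : seg) (z : R) : R := fa s + seg_slope s * (z - sa s).

Definition refine_seg (lam : R) (s : seg) : list seg :=
  let a := sa s in let b := sb s in let l := seg_len s in let m := seg_slope s in
  let x1 := a + l / 3 in let x2 := a + l / 2 in let x3 := a + 2 * l / 3 in
  let y1 := seg_val s x1 in
  let y2 := seg_val s x2 + lam * l * sqrt (1 + m ^ 2) in
  let y3 := seg_val s x3 in
  Seg a x1 (fa s) y1 :: Seg x1 x2 y1 y2 :: Seg x2 x3 y2 y3 :: Seg x3 b y3 (fb s) :: nil.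

(* The 4^n intervals of generation n (with the values of F^lambda_n at their endpoints). *)
Fixpoint gen (lam : R) (n : nat) : list seg :=
  match n with
  | O => Seg 0 1 0 0 :: nil
  | S k => flat_map (refine_seg lam) (gen lam k)
  end.

(* Evaluation of a piecewise-affine function given by its pieces: use the
   first piece whose interval contains z (values agree at shared endpoints);
   0 outside all pieces (irrelevant: only z in [0,1] is used). *)
Fixpoint eval_pieces (l : list seg) (z : R) : R :=
  match l with
  | nil => 0
  | s :: t =>
      if Rle_dec (sa s) z then
        if Rle_dec z (sb s) then seg_val s z else eval_pieces t z
      else eval_pieces t z
  end.

Definition F (lam : R) (n : nat) (z : R) : R := eval_pieces (gen lam n) z.

From Stdlib Require Import Reals Lra Psatz List.
Open Scope R_scope.

(* Each piece [s] of generation n is replaced by four pieces whose endpoint values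
   exceed those of [s] by 0 or h = lam * chord s, where chord s is the Euclidean
   length of the graph of [s]; so on [s], F_(n+1) is an affine interpolation of
   errors in [0, h] and stays within h of F_n.  The new pieces have chords at most
   chord s / 3 and chord s / 6 + h, i.e. at most (1/6 + lam) * chord s when
   lam >= 1/6.  Hence the chords of generation n are at most (1/6 + lam)^n, giving
   the bound lam * (1/6 + lam)^n for every lam > 1/6, which is below
   lam * (1/3 + 2 lam)^n. *)

Definition chord (s : seg) : R := sqrt ((sb s - sa s) ^ 2 + (fb s - fa s) ^ 2).

Lemma chord_ge0 s : 0 <= chord s.
Proof. apply sqrt_pos. Qed.

Lemma seg_len_sqrt_slope s : sa s < sb s ->
  seg_len s * sqrt (1 + seg_slope s ^ 2) = chord s.
Proof.
  intros Hs. unfold chord, seg_len, seg_slope.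
  rewrite <- (sqrt_pow2 (sb s - sa s)) at 1 by lra.
  rewrite <- sqrt_mult; [| apply pow2_ge_0 | pose proof (pow2_ge_0 ((fb s - fa s) / (sb s - sa s))); lra].
  f_equal. field. lra.
Qed.

Lemma sqrt_sum_sq_addr_le p q k : sqrt (p ^ 2 + (q + k) ^ 2) <= sqrt (p ^ 2 + q ^ 2) + Rabs k.
Proof.
  pose proof (pow2_ge_0 p) as Hp2. pose proof (pow2_ge_0 q) as Hq2. pose proof (pow2_ge_0 (q + k)).
  assert (Hr : 0 <= sqrt (p ^ 2 + q ^ 2)) by apply sqrt_pos.
  assert (Hq : Rabs q <= sqrt (p ^ 2 + q ^ 2)).
  { rewrite <- sqrt_Rsqr_abs. apply sqrt_le_1_alt. unfold Rsqr. lra. }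
  assert (Hrr : sqrt (p ^ 2 + q ^ 2) * sqrt (p ^ 2 + q ^ 2) = p ^ 2 + q ^ 2)
    by (apply sqrt_sqrt; lra).
  assert (Hqk : q * k <= Rabs q * Rabs k) by (rewrite <- Rabs_mult; apply Rle_abs).
  assert (Hkk : Rabs k * Rabs k = k * k) by (rewrite <- Rabs_mult; apply Rabs_pos_eq; nra).
  pose proof (Rabs_pos k).
  apply Rsqr_incr_0_var; [|lra].
  rewrite Rsqr_sqrt by lra. unfold Rsqr. nra.
Qed.

Lemma sqrt_sum_sq_scale t p q : 0 <= t ->
  sqrt ((t * p) ^ 2 + (t * q) ^ 2) = t * sqrt (p ^ 2 + q ^ 2).
Proof.
  intros Ht.
  replace ((t * p) ^ 2 + (t * q) ^ 2) with (t ^ 2 * (p ^ 2 + q ^ 2)) by ring.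
  rewrite sqrt_mult by (apply pow2_ge_0 || pose proof (pow2_ge_0 p); pose proof (pow2_ge_0 q); lra).
  now rewrite sqrt_pow2.
Qed.

Lemma Rabs_lerp_le a b t H : 0 <= t <= 1 -> Rabs a <= H -> Rabs b <= H ->
  Rabs (a + (b - a) * t) <= H.
Proof.
  intros Ht Ha Hb. apply Rabs_le.
  pose proof (Rle_abs a). pose proof (Rle_abs (- a)). pose proof (Rle_abs b). pose proof (Rle_abs (- b)).
  rewrite Rabs_Ropp in *. split; nra.
Qed.

Definition bump_seg (s : seg) (u v eu ev : R) : seg :=
  Seg u v (seg_val s u + eu) (seg_val s v + ev).

Lemma seg_val_bump_seg s u v eu ev z : u < v ->
  seg_val (bump_seg s u v eu ev) z - seg_val s z = eu + (ev - eu) * ((z - u) / (v - u)).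
Proof.
  intros Huv. unfold bump_seg, seg_val at 1, seg_slope at 1; cbn [sa sb fa fb].
  unfold seg_val. field. lra.
Qed.

Lemma seg_val_bump_seg_le s u v eu ev z H : u <= z <= v -> u < v ->
  Rabs eu <= H -> Rabs ev <= H -> Rabs (seg_val (bump_seg s u v eu ev) z - seg_val s z) <= H.
Proof.
  intros Hz Huv Heu Hev. rewrite seg_val_bump_seg by lra.
  apply Rabs_lerp_le; auto. split.
  - apply Rmult_le_pos; [lra | apply Rlt_le, Rinv_0_lt_compat; lra].
  - apply Rmult_le_reg_r with (v - u); [lra|]. field_simplify; lra.
Qed.

Lemma chord_bump_seg_le s u v eu ev : sa s < sb s -> u <= v ->
  chord (bump_seg s u v eu ev) <= (v - u) / (sb s - sa s) * chord s + Rabs (ev - eu).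
Proof.
  intros Hs Huv. set (t := (v - u) / (sb s - sa s)).
  assert (Ht : 0 <= t) by (apply Rmult_le_pos; [lra | apply Rlt_le, Rinv_0_lt_compat; lra]).
  unfold chord, bump_seg; cbn [sa sb fa fb].
  replace ((v - u) ^ 2 + (seg_val s v + ev - (seg_val s u + eu)) ^ 2)
    with ((t * (sb s - sa s)) ^ 2 + (t * (fb s - fa s) + (ev - eu)) ^ 2)
    by (unfold t, seg_val, seg_slope; field; lra).
  rewrite <- sqrt_sum_sq_scale by exact Ht.
  apply sqrt_sum_sq_addr_le.
Qed.

Lemma refine_seg_bump lam s : sa s < sb s ->
  refine_seg lam s =
    bump_seg s (sa s) (sa s + seg_len s / 3) 0 0
    :: bump_seg s (sa s + seg_len s / 3) (sa s + seg_len s / 2) 0 (lam * chord s)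
    :: bump_seg s (sa s + seg_len s / 2) (sa s + 2 * seg_len s / 3) (lam * chord s) 0
    :: bump_seg s (sa s + 2 * seg_len s / 3) (sb s) 0 0 :: nil.
Proof.
  intros Hs. unfold refine_seg, bump_seg. cbv zeta.
  rewrite Rmult_assoc, seg_len_sqrt_slope by exact Hs.
  repeat f_equal; unfold seg_val, seg_slope; field; lra.
Qed.

Lemma refine_seg_sub lam s p : sa s < sb s -> In p (refine_seg lam s) ->
  sa s <= sa p /\ sa p < sb p /\ sb p <= sb s.
Proof.
  intros Hs Hp. unfold refine_seg, seg_len in Hp. cbv zeta in Hp.
  destruct Hp as [<- | [<- | [<- | [<- | []]]]]; cbn [sa sb]; lra.
Qed.

Lemma refine_seg_cover lam s z : sa s < sb s -> sa s <= z <= sb s ->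
  exists p, In p (refine_seg lam s) /\ sa p <= z <= sb p.
Proof.
  intros Hs Hz. apply Exists_exists. unfold refine_seg, seg_len. cbv zeta.
  destruct (Rle_dec z (sa s + (sb s - sa s) / 3));
  destruct (Rle_dec z (sa s + (sb s - sa s) / 2));
  destruct (Rle_dec z (sa s + 2 * (sb s - sa s) / 3));
  repeat first [apply Exists_cons_hd; cbn [sa sb]; lra | apply Exists_cons_tl].
Qed.

Lemma refine_seg_close lam s p z : 0 <= lam -> sa s < sb s ->
  In p (refine_seg lam s) -> sa p <= z <= sb p ->
  Rabs (seg_val p z - seg_val s z) <= lam * chord s.
Proof.
  intros Hlam Hs Hp Hz.
  assert (Hh : Rabs (lam * chord s) <= lam * chord s)
    by (rewrite Rabs_pos_eq; [lra | apply Rmult_le_pos; [lra | apply chord_ge0]]).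
  assert (H0 : Rabs 0 <= lam * chord s)
    by (rewrite Rabs_R0; apply Rmult_le_pos; [lra | apply chord_ge0]).
  rewrite refine_seg_bump in Hp by exact Hs. unfold seg_len in *.
  destruct Hp as [<- | [<- | [<- | [<- | []]]]]; cbn [sa sb bump_seg] in Hz;
    apply seg_val_bump_seg_le; auto; lra.
Qed.

Lemma refine_seg_chord_le lam s p : 1/6 <= lam -> sa s < sb s ->
  In p (refine_seg lam s) -> chord p <= (1/6 + lam) * chord s.
Proof.
  intros Hlam Hs Hp. pose proof (chord_ge0 s).
  rewrite refine_seg_bump in Hp by exact Hs. unfold seg_len in *.
  destruct Hp as [<- | [<- | [<- | [<- | []]]]];
    (eapply Rle_trans; [apply chord_bump_seg_le; [exact Hs | lra] |]).
  all: match goal with |- ?t * _ + _ <= _ =>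
         first [replace t with (1/3) by (field; lra) | replace t with (1/6) by (field; lra)] end.
  all: rewrite ?Rminus_0_r, ?Rminus_0_l, ?Rabs_Ropp, ?Rabs_R0, ?Rabs_pos_eq by nra; nra.
Qed.

Lemma gen_sa_lt_sb lam n s : In s (gen lam n) -> sa s < sb s.
Proof.
  revert s. induction n as [|n IH]; intros s Hs; cbn [gen] in Hs.
  - destruct Hs as [<- | []]. cbn. lra.
  - apply in_flat_map in Hs as [x [Hx Hs]].
    apply (refine_seg_sub lam x s (IH x Hx) Hs).
Qed.

Lemma gen_chord_le lam n s : 1/6 <= lam -> In s (gen lam n) -> chord s <= (1/6 + lam) ^ n.
Proof.
  intros Hlam. revert s. induction n as [|n IH]; intros s Hs; cbn [gen] in Hs.
  - destruct Hs as [<- | []]. unfold chord. cbn [sa sb fa fb].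
    replace ((1 - 0) ^ 2 + (0 - 0) ^ 2) with 1 by ring. rewrite sqrt_1. cbn. lra.
  - apply in_flat_map in Hs as [x [Hx Hs]].
    eapply Rle_trans; [exact (refine_seg_chord_le lam x s Hlam (gen_sa_lt_sb lam n x Hx) Hs)|].
    cbn [pow]. apply Rmult_le_compat_l; [lra | exact (IH x Hx)].
Qed.

Lemma eval_pieces_app_covered l rest g H z :
  (exists p, In p l /\ sa p <= z <= sb p) ->
  (forall p, In p l -> sa p <= z <= sb p -> Rabs (seg_val p z - g) <= H) ->
  Rabs (eval_pieces (l ++ rest) z - g) <= H.
Proof.
  induction l as [|p l IH]; intros [q [Hq Hz]] Hclose; [destruct Hq|].
  cbn [app eval_pieces].
  destruct (Rle_dec (sa p) z); [destruct (Rle_dec z (sb p))|].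
  2, 3: destruct Hq as [<- | Hq]; [lra|];
    apply IH; [now exists q | intros p' Hp'; apply Hclose; right; exact Hp'].
  apply Hclose; [left; reflexivity | lra].
Qed.

Lemma eval_pieces_app_uncovered l rest z :
  (forall p, In p l -> ~ (sa p <= z <= sb p)) ->
  eval_pieces (l ++ rest) z = eval_pieces rest z.
Proof.
  induction l as [|p l IH]; intros Hout; [reflexivity|].
  cbn [app eval_pieces].
  assert (Hp := Hout p (or_introl eq_refl)).
  rewrite IH by (intros q Hq; apply Hout; right; exact Hq).
  destruct (Rle_dec (sa p) z); [destruct (Rle_dec z (sb p))|]; tauto.
Qed.

Lemma eval_refine_close lam K l z : 0 <= lam -> 0 <= K ->
  (forall s, In s l -> sa s < sb s /\ chord s <= K) ->
  Rabs (eval_pieces (flat_map (refine_seg lam) l) z - eval_pieces l z) <= lam * K.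
Proof.
  intros Hlam HK. induction l as [|s l IH]; intros Hl.
  - cbn. rewrite Rminus_0_r, Rabs_R0. apply Rmult_le_pos; lra.
  - destruct (Hl s (or_introl eq_refl)) as [Hs HsK].
    cbn [flat_map eval_pieces].
    destruct (Rle_dec (sa s) z); [destruct (Rle_dec z (sb s))|].
    2, 3: rewrite eval_pieces_app_uncovered; [apply IH; intros q Hq; apply Hl; right; exact Hq|];
      intros p Hp; pose proof (refine_seg_sub lam s p Hs Hp); lra.
    apply eval_pieces_app_covered; [apply refine_seg_cover; lra|].
    intros p Hp Hz. eapply Rle_trans; [exact (refine_seg_close lam s p z Hlam Hs Hp Hz)|].
    apply Rmult_le_compat_l; lra.
Qed.

Theorem lemma3p6 (lam : R) (hlam : 1/6 < lam < 5/6) (n : nat) :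
  (lam < 1/3 ->
     forall z, 0 <= z <= 1 -> Rabs (F lam (S n) z - F lam n z) <= lam * (1/3 + 2 * lam) ^ n) /\
  (1/3 <= lam ->
     forall z, 0 <= z <= 1 -> Rabs (F lam (S n) z - F lam n z) <= lam * (1/6 + lam) ^ n).
Proof.
  assert (Hstep : forall z, Rabs (F lam (S n) z - F lam n z) <= lam * (1/6 + lam) ^ n).
  { intros z. unfold F. cbn [gen]. apply eval_refine_close; [lra | apply pow_le; lra |].
    intros s Hs. split; [exact (gen_sa_lt_sb lam n s Hs) | apply gen_chord_le; [lra | exact Hs]]. }
  split; intros _ z _; [|apply Hstep].
  eapply Rle_trans; [apply Hstep|].
  apply Rmult_le_compat_l; [lra | apply pow_incr; lra].
Qed.
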